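(* Consider the algorithm SCHEMATIC-ALGO$(G,\mu^*,m^*,\Delta^*,\gamma)$ described in the context. Suppose we are at the start of round $k$ for some $k\ge1$; let $H_k$ denote the current set $H$, and let $U_k$ be the set of edges in $E\setminus H_k$ that are underfull w.r.t. $H_k$. If $|U_k|\ge\mu^*\cdot(\Delta^* )^\gamma$, then with high probability the algorithm does not terminate at the end of round $k$ (i.e. it proceeds to round $k+1$).
   Context: Let $G=(V,E)$ be a graph with $n$ vertices, $m$ edges, average degree $d$; $\mu(G)$ is its maximum matching size. Fix a small constant $\epsilon\in(0,1)$ and $\beta:=1/\Theta(\epsilon^3)$. For $H\subseteq E$ and a pair $e=(u,v)$, $\deg_e(H):=\deg_u(H)+\deg_v(H)$. An edge $e$ is underfull w.r.t. $H$ if $\deg_e(H)<(1-\epsilon)\beta$ and overfull w.r.t. $H$ if $\deg_e(H)>\beta$. The parameters satisfy $\mu(G)/(2+\epsilon)\le\mu^*\le n$, $d\le\Delta^*\le n$, $m^*\ge m$, $0<\gamma<1$. SCHEMATIC-ALGO: set $H\leftarrow\emptyset$. Repeat rounds: in each round set Status $\leftarrow$ false; for $i=1,\dots,(100m^*\log n)/(\mu^*(\Delta^* )^\gamma)$, sample an edge $e\in E$ uniformly at random (independently, with repetition); if $e\in E\setminus H$ and $e$ is underfull w.r.t. $H$, then set Status $\leftarrow$ true, $H\leftarrow H\cup\{e\}$, and then while some edge of $H$ is overfull w.r.t. $H$, remove such an edge from $H$. If at the end of a round Status is false, stop the rounds (this is the last round). Then let $U$ be the set of edges of $E\setminus H$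 underfull w.r.t. $H$, take any $V_{small}\subseteq V$ with $\{v:\deg_v(U)\le (1-\epsilon)(\Delta^* )^\gamma/\epsilon\}\subseteq V_{small}\subseteq\{v:\deg_v(U)\le(1+\epsilon)(\Delta^* )^\gamma/\epsilon\}$, let $E_{small}:=\{(u,v)\in H\cup U: u,v\in V_{small}\}$, and return $\mu(E_{small})$. ''With high probability'' means with probability at least $1-1/\mathrm{poly}(n)$. *)

From HB Require Import structures.
From mathcomp Require Import all_boot all_order all_algebra.
From mathcomp Require Import all_classical all_reals all_analysis.
Set Implicit Arguments. Unset Strict Implicit. Unset Printing Implicit Defensive.
Import Order.TTheory GRing.Theory Num.Theory.
Local Open Scope ring_scope.

Section Defs.
Variable V : finType.
Definition simple_graph (E : {set {set V}}) : bool := [forall e in E, #|e| == 2]%N.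

Definition is_matching (E M : {set {set V}}) : bool :=
  (M \subset E) && [forall e1 in M, forall e2 in M, (e1 != e2) ==> [disjoint e1 & e2]].
Definition mu (E : {set {set V}}) : nat :=
  \max_(M : {set {set V}} | is_matching E M) #|M|.

Definition degv (H : {set {set V}}) (v : V) : nat := #|[set e in H | v \in e]|.
Definition dege (H : {set {set V}}) (e : {set V}) : nat := (\sum_(v in e) degv H v)%N.

Variable R : realType.
Definition underfull (eps beta : R) (H : {set {set V}}) (e : {set V}) : bool :=
  (dege H e)%:R < (1 - eps) * beta.
Definition overfull (beta : R) (H : {set {set V}}) (e : {set V}) : bool :=
  beta < (dege H e)%:R.

Definition underfull_set (eps beta : R) (E H : {set {set V}}) : {set {set V}} :=
  [set e in E | (e \notin H) && underfull eps beta H e].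

(* "while some edge of H is overfull, remove such an edge"; the edge removed is
   chosen by an arbitrary selection function [sel].  Each effective iteration
   removes an element, so #|{set V}|.+1 iterations suffice to reach the fixpoint. *)
Definition cleanup (beta : R) (sel : {set {set V}} -> {set V}) (H : {set {set V}}) :=
  iter #|{set V}|.+1
    (fun K : {set {set V}} => if [exists f in K, overfull beta K f] then K :\ sel K else K) H.

(* processing one sampled edge; state = (H, Status) *)
Definition step (eps beta : R) (sel : {set {set V}} -> {set V})
    (st : {set {set V}} * bool) (e : {set V}) : {set {set V}} * bool :=
  if (e \notin st.1) && underfull eps beta st.1 e
  then (cleanup beta sel (e |: st.1), true) else st.

Definition run_round (eps beta : R) (sel : {set {set V}} -> {set V})
    (H0 : {set {set V}}) (s : seq {set V}) : {set {set V}} * bool :=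
  foldl (step eps beta sel) (H0, false) s.

Definition num_samples (n : nat) (mstar mustar Dstar gamma : R) : nat :=
  Num.truncn ((100 * mstar * ln (n%:R)) / (mustar * powR Dstar gamma)).

(* probability (over N i.i.d. uniform samples from E) that the round ends with
   Status = false, i.e. that the algorithm terminates at the end of the round *)
Definition prob_terminate (eps beta : R) (sel : {set {set V}} -> {set V})
    (E H0 : {set {set V}}) (N : nat) : R :=
  (#|[set t : N.-tuple {set V} | all (mem E) t & ~~ (run_round eps beta sel H0 t).2]|%:R)
  / ((#|E| ^ N)%N)%:R.
End Defs.

From HB Require Import structures.
From mathcomp Require Import all_boot all_order all_algebra.
From mathcomp Require Import all_classical all_reals all_analysis.
From mathcomp Require Import ring lra.
Set Implicit Arguments. Unset Strict Implicit. Unset Printing Implicit Defensive.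
Import Order.TTheory GRing.Theory Num.Theory.
Local Open Scope ring_scope.

(* A round ends with Status = false only if none of its N uniform samples hits
   the set U of underfull edges, which happens with probability
   (1 - |U|/|E|)^N <= exp(-N |U|/|E|).  Since |U| >= mustar Dstar^gamma and
   |E| <= mstar, the exponent is at least N mustar Dstar^gamma / mstar, and
   N = floor(100 mstar ln n / (mustar Dstar^gamma)) makes this at least ln n,
   so the probability is at most 1/n. *)

Lemma card_tuples_all_mem (T : finType) (A : {set T}) (N : nat) :
  #|[set t : N.-tuple T | all (mem A) t]| = (#|A| ^ N)%N.
Proof.
pose f (t : N.-tuple T) : {ffun 'I_N -> T} := [ffun i => tnth t i].
have inj_f : injective f.
  by move=> t1 t2 /ffunP eq_t; apply: eq_from_tnth => i; have := eq_t i; rewrite !ffunE.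
rewrite -(card_imset _ inj_f) -[in RHS](card_ord N) -card_ffun_on.
apply: eq_card => g; apply/imsetP/ffun_onP => [[t] | g_on].
  by rewrite inE => /all_tnthP t_in -> i; rewrite ffunE; apply: t_in.
exists [tuple g i | i < N].
  by rewrite inE; apply/all_tnthP => i; rewrite tnth_mktuple; apply: g_on.
by apply/ffunP => i; rewrite !ffunE tnth_mktuple.
Qed.

Section Estimates.
Variable R : realType.

Lemma expn_1B_le_expR (p : R) (N : nat) :
  0 <= p <= 1 -> (1 - p) ^+ N <= expR (- (N%:R * p)).
Proof.
move=> /andP[p_ge0 p_le1]; rewrite -mulrN expRM_natl.
apply: lerXn2r; rewrite ?nnegrE ?expR_ge0 ?subr_ge0 //.
exact: expR_ge1Dx.
Qed.

Lemma ln_ge_half (x : R) : 2 <= x -> 1 / 2 <= ln x.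
Proof.
move=> x_ge2; have := expR_ge1Dx (- ln x).
rewrite expRN lnK ?posrE; last lra.
have : x^-1 <= 1 / 2 by rewrite -div1r ler_pdivrMr; lra.
lra.
Qed.

(* [num_samples] truncates the real quotient x, so only N > x - 1 is known;
   the factor 100 absorbs the lost unit because ln n >= 1/2. *)
Lemma num_samples_mul_ge (n : nat) (mstar mustar Dstar gamma : R) :
  (2 <= n)%N -> 0 < mustar * powR Dstar gamma <= mstar ->
  ln n%:R <= (num_samples n mstar mustar Dstar gamma)%:R
             * (mustar * powR Dstar gamma / mstar).
Proof.
move=> n_ge2 /andP[P_gt0 P_le_m].
set P := mustar * powR Dstar gamma; set x := 100 * mstar * ln n%:R / P.
set q := P / mstar; set N := num_samples _ _ _ _ _.
have m_gt0 : 0 < mstar by lra.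
have q_gt0 : 0 < q by apply: divr_gt0.
have q_le1 : q <= 1 by rewrite ler_pdivrMr // mul1r.
have xq : x * q = 100 * ln n%:R.
  by rewrite /x /q; field; rewrite !gt_eqF.
have x_lt : x < N%:R + 1 by rewrite natr1; apply: truncnS_gt.
have Nq_ge : (x - 1) * q <= N%:R * q by apply: ler_wpM2r; lra.
have ln_half : 1 / 2 <= ln (n%:R : R).
  by apply: ln_ge_half; rewrite ler_nat.
move: Nq_ge; rewrite mulrBl xq mul1r; clearbody q; lra.
Qed.

End Estimates.

Section Graph.
Variables (V : finType) (E : {set {set V}}).

Lemma simple_graph_card_ge2 : simple_graph E -> (0 < #|E|)%N -> (2 <= #|V|)%N.
Proof.
move=> /forallP simpleE; rewrite card_gt0 => /set0Pn[e eE].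
by move: (simpleE e); rewrite eE => /eqP <-; apply: max_card.
Qed.

Lemma mu_gt0 : (0 < #|E|)%N -> (0 < mu E)%N.
Proof.
rewrite card_gt0 => /set0Pn[e eE].
suff matching_e : is_matching E [set e].
  by apply: leq_trans (leq_bigmax_cond _ matching_e); rewrite cards1.
apply/andP; split; first by rewrite finset.sub1set.
apply/forallP => e1; apply/implyP; rewrite inE => /eqP->.
by apply/forallP => e2; apply/implyP; rewrite inE => /eqP->; rewrite eqxx.
Qed.

End Graph.

Section Round.
Variables (V : finType) (R : realType) (eps beta : R).
Variable sel : {set {set V}} -> {set V}.

Lemma foldl_step_status (st : {set {set V}} * bool) (s : seq {set V}) :
  st.2 -> (foldl (step eps beta sel) st s).2.
Proof.
elim: s st => [|e s IHs] st //= st_true; apply: IHs.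
by rewrite /step; case: ifP.
Qed.

Lemma run_round_false_avoids_underfull (E H : {set {set V}}) (s : seq {set V}) :
  all (mem E) s -> ~~ (run_round eps beta sel H s).2 ->
  all (mem (E :\: underfull_set eps beta E H)) s.
Proof.
rewrite /run_round; elim: s => [|e s IHs] //= /andP[eE sE].
rewrite [step _ _ _ (H, false) e]/step /=; case: ifP => [_ | not_added].
  by rewrite foldl_step_status.
by move=> /(IHs sE) ->; rewrite andbT !inE eE not_added.
Qed.

Lemma underfull_set_sub (E H : {set {set V}}) : underfull_set eps beta E H \subset E.
Proof. by apply/fintype.subsetP => e; rewrite inE => /andP[]. Qed.

Lemma prob_terminate_le (E H : {set {set V}}) (N : nat) : (0 < #|E|)%N ->
  prob_terminate eps beta sel E H N
    <= (1 - #|underfull_set eps beta E H|%:R / #|E|%:R) ^+ N.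
Proof.
move=> E_gt0; set U := underfull_set eps beta E H.
have UE : U \subset E := underfull_set_sub E H.
have -> : 1 - #|U|%:R / #|E|%:R = #|E :\: U|%:R / #|E|%:R :> R.
  rewrite cardsD (finset.setIidPr UE) natrB ?subset_leq_card //.
  by rewrite mulrBl divff // pnatr_eq0 -lt0n.
rewrite /prob_terminate expr_div_n -!natrX -(card_tuples_all_mem (E :\: U)).
rewrite ler_wpM2r ?invr_ge0 ?ler0n // ler_nat; apply: subset_leq_card.
apply/fintype.subsetP => t; rewrite !inE => /andP[tE not_status].
exact: run_round_false_avoids_underfull.
Qed.

Lemma prob_terminate_le_expR (E H : {set {set V}}) (N : nat) : (0 < #|E|)%N ->
  prob_terminate eps beta sel E H N
    <= expR (- (N%:R * (#|underfull_set eps beta E H|%:R / #|E|%:R))).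
Proof.
move=> E_gt0; apply: le_trans (prob_terminate_le H N E_gt0) _.
apply: expn_1B_le_expR; rewrite divr_ge0 ?ler0n // ler_pdivrMr ?ltr0n // mul1r.
by rewrite ler_nat subset_leq_card ?underfull_set_sub.
Qed.

End Round.

Theorem lemma3p2 :
  exists c : nat, (0 < c)%N /\
  forall (R : realType) (V : finType) (E : {set {set V}})
         (eps beta mustar mstar Dstar gamma : R)
         (sel : {set {set V}} -> {set V}) (Hk : {set {set V}}),
    simple_graph E -> (0 < #|E|)%N ->
    0 < eps < 1 -> 0 < beta ->
    (mu E)%:R / (2 + eps) <= mustar -> mustar <= #|V|%:R ->
    (2 * #|E|)%:R / #|V|%:R <= Dstar -> Dstar <= #|V|%:R ->
    #|E|%:R <= mstar -> 0 < gamma < 1 ->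
    (forall H : {set {set V}}, [exists f in H, overfull beta H f] ->
        sel H \in H /\ overfull beta H (sel H)) ->
    Hk \subset E ->
    mustar * powR Dstar gamma <= #|underfull_set eps beta E Hk|%:R ->
    prob_terminate eps beta sel E Hk
      (num_samples #|V| mstar mustar Dstar gamma) <= (#|V|%:R ^+ c)^-1.
Proof.
exists 1%N; split => // R V E eps beta mustar mstar Dstar gamma sel Hk
  simpleE E_gt0 /andP[eps_gt0 _] _ mu_le _ deg_le _ m_ge _ _ _ U_ge.
set U := underfull_set eps beta E Hk; set N := num_samples _ _ _ _ _.
set P := mustar * powR Dstar gamma.
have n_ge2 := simple_graph_card_ge2 simpleE E_gt0.
have n_gt0 : (0 < #|V|)%N := ltnW n_ge2.
have mustar_gt0 : 0 < mustar.
  by apply: lt_le_trans mu_le; rewrite divr_gt0 ?ltr0n ?mu_gt0 //; lra.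
have Dstar_gt0 : 0 < Dstar.
  by apply: lt_le_trans deg_le; rewrite divr_gt0 ?ltr0n ?muln_gt0.
have P_gt0 : 0 < P by rewrite mulr_gt0 ?powR_gt0.
have U_le_E : #|U|%:R <= #|E|%:R :> R.
  by rewrite ler_nat subset_leq_card ?underfull_set_sub.
have P_le_m : P <= mstar by apply: le_trans U_ge (le_trans U_le_E m_ge).
have q_le_p : P / mstar <= #|U|%:R / #|E|%:R.
  rewrite ler_pdivrMr ?(lt_le_trans P_gt0) // mulrAC ler_pdivlMr ?ltr0n //.
  by apply: ler_pM => //; apply: ltW.
have ln_le : ln #|V|%:R <= N%:R * (P / mstar).
  by apply: num_samples_mul_ge => //; rewrite P_gt0 P_le_m.
apply: le_trans (prob_terminate_le_expR _ _ _ _ _ E_gt0) _.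
rewrite expr1 -[X in _ <= X^-1]lnK ?posrE ?ltr0n // -expRN ler_expR lerN2.
by apply: le_trans ln_le _; apply: ler_wpM2l.
Qed.
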